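(* Let $n=3$, $s_0,s_1,s_2,b_0,b_1,b_2\in\mathbb{R}$, $S=s_0+s_1+s_2$, and assume (C1)–(C21) hold. Then the conjunction of the rules (R1), (R2$_0$) and (R3$_0$) is equivalent to the conjunction of the following statements: (i) If $b_0=\frac12$, then (C4), (C8), (C10), (C11) are strict. (ii) If $b_1=\frac12$, then (C3), (C7), (C9), (C11) are strict. (iii) If $b_2=\frac12$, then (C2), (C6), (C9), (C10) are strict. (iv) If $b_0+b_1=1$, or $b_0+b_2=1$, or $b_1+b_2=1$, or $b_0+b_1+b_2=1$, then (C5) is strict. (v) If $b_0+b_1=\frac12$ then (C6) is strict; if $b_0+b_2=\frac12$ then (C7) is strict; if $b_1+b_2=\frac12$ then (C8) is strict. (vi) If $s_0-b_0$ equals one of $\frac52-2(b_0+b_1+b_2)$, $\frac32-2(b_0+b_1)$, $\frac32-2(b_0+b_2)$, $\frac12-2b_0$, $\frac12$, $\frac32-2b_0$, then (C13) is strict. (vii) If one of (C5)–(C12) is an equality, then (C16) and (C19) are strict.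
   Context: Conditions, with $S=s_0+s_1+s_2$: (C1) $b_0+b_1+b_2\ge\frac12$; (C2) $b_0+b_1\ge0$; (C3) $b_0+b_2\ge0$; (C4) $b_1+b_2\ge0$; (C5) $S\ge 2-(b_0+b_1+b_2)$; (C6) $S\ge\frac32-(b_0+b_1)$; (C7) $S\ge\frac32-(b_0+b_2)$; (C8) $S\ge\frac32-(b_1+b_2)$; (C9) $S\ge1-b_0$; (C10) $S\ge1-b_1$; (C11) $S\ge 1-b_2$; (C12) $S\ge1$; (C13) $s_0+b_0+2s_1+2s_2\ge\frac32$; (C14) $2s_0+s_1+b_1+2s_2\ge\frac32$; (C15) $2s_0+2s_1+s_2+b_2\ge\frac32$; (C16) $s_1+s_2\ge-b_0$; (C17) $s_0+s_2\ge-b_1$; (C18) $s_0+s_1\ge-b_2$; (C19) $s_1+s_2\ge0$; (C20) $s_0+s_2\ge0$; (C21) $s_0+s_1\ge0$. ''Strict'' means the inequality holds with $>$. Rules: (R1) It is not the case that both $b_0+b_1+b_2=\tfrac12$ and $b_0+b_1+b_2=\max(b_0,b_1,b_2)$. (R2$_0$) At most one of the following is an equality: (E1) $S\ge 2-(b_0+b_1+b_2)$; (E2) $S\ge \tfrac32+\max(-b_0-b_1,-b_0-b_2,-b_1-b_2)$; (E3) $S\ge 1+\max(-b_0,-b_1,-b_2,0)$; (E4$_0$) $S\ge s_0+\max(0,-b_0)$. (R3$_0$) At most one of the following is an equality: (E1), (E2), (E3), (E5$_0$) $S\ge \tfrac34+\tfrac{s_0-b_0}{2}$, (E6$_0$)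 $S\ge s_0$. *)

From Stdlib Require Import Reals Lra List.
Open Scope R_scope.

Definition Ssum (s0 s1 s2 : R) : R := s0 + s1 + s2.

(* Condition (Ck) is "lhs >= rhs"; cond k returns (lhs, rhs). *)
Definition cond (k : nat) (s0 s1 s2 b0 b1 b2 : R) : R * R :=
  let S := Ssum s0 s1 s2 in
  match k with
  | 1  => (b0 + b1 + b2, 1/2)
  | 2  => (b0 + b1, 0)
  | 3  => (b0 + b2, 0)
  | 4  => (b1 + b2, 0)
  | 5  => (S, 2 - (b0 + b1 + b2))
  | 6  => (S, 3/2 - (b0 + b1))
  | 7  => (S, 3/2 - (b0 + b2))
  | 8  => (S, 3/2 - (b1 + b2))
  | 9  => (S, 1 - b0)
  | 10 => (S, 1 - b1)
  | 11 => (S, 1 - b2)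
  | 12 => (S, 1)
  | 13 => (s0 + b0 + 2*s1 + 2*s2, 3/2)
  | 14 => (2*s0 + s1 + b1 + 2*s2, 3/2)
  | 15 => (2*s0 + 2*s1 + s2 + b2, 3/2)
  | 16 => (s1 + s2, - b0)
  | 17 => (s0 + s2, - b1)
  | 18 => (s0 + s1, - b2)
  | 19 => (s1 + s2, 0)
  | 20 => (s0 + s2, 0)
  | 21 => (s0 + s1, 0)
  | _  => (0, 0)
  end.

Definition holds (k : nat) s0 s1 s2 b0 b1 b2 : Prop :=
  let p := cond k s0 s1 s2 b0 b1 b2 in fst p >= snd p.
Definition strict (k : nat) s0 s1 s2 b0 b1 b2 : Prop :=
  let p := cond k s0 s1 s2 b0 b1 b2 in fst p > snd p.
Definition equality (k : nat) s0 s1 s2 b0 b1 b2 : Prop :=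
  let p := cond k s0 s1 s2 b0 b1 b2 in fst p = snd p.

Fixpoint at_most_one (l : list Prop) : Prop :=
  match l with
  | nil => True
  | P :: l' => (P -> Forall (fun Q => ~ Q) l') /\ at_most_one l'
  end.

Definition Rule1 (b0 b1 b2 : R) : Prop :=
  ~ (b0 + b1 + b2 = 1/2 /\ b0 + b1 + b2 = Rmax b0 (Rmax b1 b2)).

(* The inequalities (E1)-(E6_0), as equalities *)
Definition E1eq s0 s1 s2 b0 b1 b2 : Prop :=
  Ssum s0 s1 s2 = 2 - (b0 + b1 + b2).
Definition E2eq s0 s1 s2 b0 b1 b2 : Prop :=
  Ssum s0 s1 s2 = 3/2 + Rmax (- b0 - b1) (Rmax (- b0 - b2) (- b1 - b2)).
Definition E3eq s0 s1 s2 b0 b1 b2 : Prop :=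
  Ssum s0 s1 s2 = 1 + Rmax (- b0) (Rmax (- b1) (Rmax (- b2) 0)).
Definition E4_0eq s0 s1 s2 b0 (b1 b2 : R) : Prop :=
  Ssum s0 s1 s2 = s0 + Rmax 0 (- b0).
Definition E5_0eq s0 s1 s2 b0 (b1 b2 : R) : Prop :=
  Ssum s0 s1 s2 = 3/4 + (s0 - b0) / 2.
Definition E6_0eq s0 s1 s2 (b0 b1 b2 : R) : Prop :=
  Ssum s0 s1 s2 = s0.

Definition Rule2_0 s0 s1 s2 b0 b1 b2 : Prop :=
  at_most_one (E1eq s0 s1 s2 b0 b1 b2 :: E2eq s0 s1 s2 b0 b1 b2 ::
               E3eq s0 s1 s2 b0 b1 b2 :: E4_0eq s0 s1 s2 b0 b1 b2 :: nil).

Definition Rule3_0 s0 s1 s2 b0 b1 b2 : Prop :=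
  at_most_one (E1eq s0 s1 s2 b0 b1 b2 :: E2eq s0 s1 s2 b0 b1 b2 ::
               E3eq s0 s1 s2 b0 b1 b2 :: E5_0eq s0 s1 s2 b0 b1 b2 ::
               E6_0eq s0 s1 s2 b0 b1 b2 :: nil).

(* Under (C1)-(C21) each of (E1)-(E6_0) is attained exactly when one of the
   conditions it summarises is tight: (E1) is (C5), (E2) is one of (C6)-(C8),
   (E3) one of (C9)-(C12), (E4_0) is (C16) or (C19), (E5_0) is (C13) and
   (E6_0) is (C19); likewise (R1) forbids (C1) being tight together with one
   of (C2)-(C4).  The rules thus forbid certain pairs of tight conditions, and
   the forbidden pairs fall into six groups.  In each group, two conditions
   that are tight simultaneously force, by linear arithmetic in the polytope
   (C1)-(C21), one of the coincidences listed in (i)-(vii) (or are outright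
   infeasible), and conversely. *)

From Stdlib Require Import Reals List Lra Lia Setoid.
Open Scope R_scope.

Lemma exists_equality_5to12_iff s0 s1 s2 b0 b1 b2 :
  (exists k : nat, (5 <= k <= 12)%nat /\ equality k s0 s1 s2 b0 b1 b2) <->
  equality 5 s0 s1 s2 b0 b1 b2 \/ equality 6 s0 s1 s2 b0 b1 b2 \/
  equality 7 s0 s1 s2 b0 b1 b2 \/ equality 8 s0 s1 s2 b0 b1 b2 \/
  equality 9 s0 s1 s2 b0 b1 b2 \/ equality 10 s0 s1 s2 b0 b1 b2 \/
  equality 11 s0 s1 s2 b0 b1 b2 \/ equality 12 s0 s1 s2 b0 b1 b2.
Proof.
  split.
  - intros [k [Hk Heq]].
    assert (k = 5 \/ k = 6 \/ k = 7 \/ k = 8 \/ k = 9 \/ k = 10 \/ k = 11 \/ k = 12)%nat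
      as Hcases by lia.
    repeat destruct Hcases as [?|Hcases]; subst; tauto.
  - intros H; repeat destruct H as [H|H]; eexists; split; try eassumption; lia.
Qed.

Ltac destruct_or H :=
  lazymatch type of H with
  | _ \/ _ => destruct H as [H|H]; destruct_or H
  | _ => idtac
  end.

Ltac destruct_ands :=
  repeat match goal with H : _ /\ _ |- _ => destruct H end.

Ltac split_ands := repeat match goal with |- _ /\ _ => split end.

Ltac prove_disj := first [lra | left; prove_disj | right; prove_disj].

Ltac cases_Rmax :=
  repeat match goal with
  | |- context [Rmax ?a ?b] =>
      lazymatch constr:((a, b)) with
      | context [Rmax _ _] => fail
      | _ => destruct (Rle_or_lt a b);
             [rewrite (Rmax_right a b) by lra | rewrite (Rmax_left a b) by lra]
      end
  end.

Ltac unfold_conditions C :=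
  let rec load k :=
    lazymatch k with
    | O => idtac
    | Datatypes.S ?k' => pose proof (C k ltac:(lia)); load k'
    end in
  load 21%nat;
  unfold holds, strict, equality, E1eq, E2eq, E3eq, E4_0eq, E5_0eq, E6_0eq in *;
  cbn [cond fst snd] in *; unfold Ssum in *.

(* For "forbidden pair <-> list of strictness requirements": a requirement is
   violated by exhibiting the forbidden pair, and a forbidden pair is either
   infeasible or triggers a requirement whose hypothesis it implies. *)
Ltac exclusion_iff_strictness :=
  split;
  [ intros Hpair; split_ands; intros Hcoinc; destruct_or Hcoinc; split_ands;
    apply Rnot_le_gt; intros Hle; apply Hpair; split; prove_disj
  | intros Hreq [Htight1 Htight2]; destruct_or Htight1; destruct_or Htight2; destruct_ands;
    first
      [ lra
      | match goal with
        | h : _ -> _ |- False => pose proof (h ltac:(prove_disj)); destruct_ands; lra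
        end ] ].

Section Polytope.

Variables s0 s1 s2 b0 b1 b2 : R.
Hypothesis conditions :
  forall k : nat, (1 <= k <= 21)%nat -> holds k s0 s1 s2 b0 b1 b2.

Local Notation tight k := (equality k s0 s1 s2 b0 b1 b2).
Local Notation strict k := (strict k s0 s1 s2 b0 b1 b2).

Lemma Rule1_iff_tight :
  Rule1 b0 b1 b2 <-> ~ (tight 1 /\ (tight 2 \/ tight 3 \/ tight 4)).
Proof.
  apply not_iff_compat; unfold_conditions conditions; cases_Rmax;
    split; intros [HB Hmax]; (split; [lra|]); destruct_or Hmax; prove_disj.
Qed.

Lemma E1eq_iff_tight : E1eq s0 s1 s2 b0 b1 b2 <-> tight 5.
Proof. unfold_conditions conditions; split; intros; lra. Qed.

Lemma E2eq_iff_tight :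
  E2eq s0 s1 s2 b0 b1 b2 <-> tight 6 \/ tight 7 \/ tight 8.
Proof. unfold_conditions conditions; cases_Rmax; split; intros Heq; destruct_or Heq; prove_disj. Qed.

Lemma E3eq_iff_tight :
  E3eq s0 s1 s2 b0 b1 b2 <-> tight 9 \/ tight 10 \/ tight 11 \/ tight 12.
Proof. unfold_conditions conditions; cases_Rmax; split; intros Heq; destruct_or Heq; prove_disj. Qed.

Lemma E4_0eq_iff_tight : E4_0eq s0 s1 s2 b0 b1 b2 <-> tight 16 \/ tight 19.
Proof. unfold_conditions conditions; cases_Rmax; split; intros Heq; destruct_or Heq; prove_disj. Qed.

Lemma E5_0eq_iff_tight : E5_0eq s0 s1 s2 b0 b1 b2 <-> tight 13.
Proof. unfold_conditions conditions; split; intros; lra. Qed.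

Lemma E6_0eq_iff_tight : E6_0eq s0 s1 s2 b0 b1 b2 <-> tight 19.
Proof. unfold_conditions conditions; split; intros; lra. Qed.

Lemma rules_iff_exclusions :
  Rule1 b0 b1 b2 /\ Rule2_0 s0 s1 s2 b0 b1 b2 /\ Rule3_0 s0 s1 s2 b0 b1 b2 <->
  ~ (tight 1 /\ (tight 2 \/ tight 3 \/ tight 4)) /\
  ~ (tight 5 /\ (tight 6 \/ tight 7 \/ tight 8)) /\
  ~ (tight 5 /\ (tight 9 \/ tight 10 \/ tight 11 \/ tight 12)) /\
  ~ ((tight 6 \/ tight 7 \/ tight 8) /\ (tight 9 \/ tight 10 \/ tight 11 \/ tight 12)) /\
  ~ ((tight 5 \/ tight 6 \/ tight 7 \/ tight 8 \/ tight 9 \/ tight 10 \/ tight 11 \/ tight 12)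
     /\ (tight 16 \/ tight 19)) /\
  ~ ((tight 5 \/ tight 6 \/ tight 7 \/ tight 8 \/ tight 9 \/ tight 10 \/ tight 11 \/ tight 12
      \/ tight 19) /\ tight 13).
Proof.
  unfold Rule2_0, Rule3_0; cbn [at_most_one].
  rewrite !Forall_cons_iff, !Forall_nil_iff.
  rewrite Rule1_iff_tight, E1eq_iff_tight, E2eq_iff_tight, E3eq_iff_tight,
    E4_0eq_iff_tight, E5_0eq_iff_tight, E6_0eq_iff_tight.
  tauto.
Qed.

Lemma no_tight_1_2to4_iff :
  ~ (tight 1 /\ (tight 2 \/ tight 3 \/ tight 4)) <->
  (b0 = 1/2 -> strict 4) /\ (b1 = 1/2 -> strict 3) /\ (b2 = 1/2 -> strict 2).
Proof. unfold_conditions conditions; exclusion_iff_strictness. Qed.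

Lemma no_tight_5_6to8_iff :
  ~ (tight 5 /\ (tight 6 \/ tight 7 \/ tight 8)) <->
  (b0 = 1/2 -> strict 8) /\ (b1 = 1/2 -> strict 7) /\ (b2 = 1/2 -> strict 6).
Proof. unfold_conditions conditions; exclusion_iff_strictness. Qed.

Lemma no_tight_5_9to12_iff :
  ~ (tight 5 /\ (tight 9 \/ tight 10 \/ tight 11 \/ tight 12)) <->
  (b0 + b1 = 1 \/ b0 + b2 = 1 \/ b1 + b2 = 1 \/ b0 + b1 + b2 = 1 -> strict 5).
Proof. unfold_conditions conditions; exclusion_iff_strictness. Qed.

Lemma no_tight_6to8_9to12_iff :
  ~ ((tight 6 \/ tight 7 \/ tight 8) /\ (tight 9 \/ tight 10 \/ tight 11 \/ tight 12)) <->
  (b0 = 1/2 -> strict 10 /\ strict 11) /\ (b1 = 1/2 -> strict 9 /\ strict 11) /\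
  (b2 = 1/2 -> strict 9 /\ strict 10) /\
  (b0 + b1 = 1/2 -> strict 6) /\ (b0 + b2 = 1/2 -> strict 7) /\
  (b1 + b2 = 1/2 -> strict 8).
Proof. unfold_conditions conditions; exclusion_iff_strictness. Qed.

Lemma no_tight_5to12_16_19_iff :
  ~ ((tight 5 \/ tight 6 \/ tight 7 \/ tight 8 \/ tight 9 \/ tight 10 \/ tight 11 \/ tight 12)
     /\ (tight 16 \/ tight 19)) <->
  ((exists k : nat, (5 <= k <= 12)%nat /\ tight k) -> strict 16 /\ strict 19).
Proof. rewrite exists_equality_5to12_iff; unfold_conditions conditions; exclusion_iff_strictness. Qed.

(* (C13) tight means S = 3/4 + (s0 - b0)/2, so each value of s0 - b0 in (vi)
   makes S meet one of the other tight conditions. *)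
Lemma no_tight_5to12_19_13_iff :
  ~ ((tight 5 \/ tight 6 \/ tight 7 \/ tight 8 \/ tight 9 \/ tight 10 \/ tight 11 \/ tight 12
      \/ tight 19) /\ tight 13) <->
  (s0 - b0 = 5/2 - 2 * (b0 + b1 + b2) \/ s0 - b0 = 3/2 - 2 * (b0 + b1) \/
   s0 - b0 = 3/2 - 2 * (b0 + b2) \/ s0 - b0 = 1/2 - 2 * b0 \/
   s0 - b0 = 1/2 \/ s0 - b0 = 3/2 - 2 * b0 -> strict 13).
Proof. unfold_conditions conditions; exclusion_iff_strictness. Qed.

End Polytope.

Theorem theorem3 (s0 s1 s2 b0 b1 b2 : R) :
  (forall k : nat, (1 <= k <= 21)%nat -> holds k s0 s1 s2 b0 b1 b2) ->
  ( (Rule1 b0 b1 b2 /\ Rule2_0 s0 s1 s2 b0 b1 b2 /\ Rule3_0 s0 s1 s2 b0 b1 b2)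
    <->
    ( (* (i) *)
      (b0 = 1/2 -> strict 4 s0 s1 s2 b0 b1 b2 /\ strict 8 s0 s1 s2 b0 b1 b2 /\
                   strict 10 s0 s1 s2 b0 b1 b2 /\ strict 11 s0 s1 s2 b0 b1 b2) /\
      (* (ii) *)
      (b1 = 1/2 -> strict 3 s0 s1 s2 b0 b1 b2 /\ strict 7 s0 s1 s2 b0 b1 b2 /\
                   strict 9 s0 s1 s2 b0 b1 b2 /\ strict 11 s0 s1 s2 b0 b1 b2) /\
      (* (iii) *)
      (b2 = 1/2 -> strict 2 s0 s1 s2 b0 b1 b2 /\ strict 6 s0 s1 s2 b0 b1 b2 /\
                   strict 9 s0 s1 s2 b0 b1 b2 /\ strict 10 s0 s1 s2 b0 b1 b2) /\
      (* (iv) *)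
      (b0 + b1 = 1 \/ b0 + b2 = 1 \/ b1 + b2 = 1 \/ b0 + b1 + b2 = 1 ->
         strict 5 s0 s1 s2 b0 b1 b2) /\
      (* (v) *)
      (b0 + b1 = 1/2 -> strict 6 s0 s1 s2 b0 b1 b2) /\
      (b0 + b2 = 1/2 -> strict 7 s0 s1 s2 b0 b1 b2) /\
      (b1 + b2 = 1/2 -> strict 8 s0 s1 s2 b0 b1 b2) /\
      (* (vi) *)
      (s0 - b0 = 5/2 - 2 * (b0 + b1 + b2) \/ s0 - b0 = 3/2 - 2 * (b0 + b1) \/
       s0 - b0 = 3/2 - 2 * (b0 + b2) \/ s0 - b0 = 1/2 - 2 * b0 \/
       s0 - b0 = 1/2 \/ s0 - b0 = 3/2 - 2 * b0 ->
         strict 13 s0 s1 s2 b0 b1 b2) /\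
      (* (vii) *)
      ((exists k : nat, (5 <= k <= 12)%nat /\ equality k s0 s1 s2 b0 b1 b2) ->
         strict 16 s0 s1 s2 b0 b1 b2 /\ strict 19 s0 s1 s2 b0 b1 b2) )).
Proof.
  intros C.
  rewrite rules_iff_exclusions, no_tight_1_2to4_iff, no_tight_5_6to8_iff, no_tight_5_9to12_iff,
    no_tight_6to8_9to12_iff, no_tight_5to12_16_19_iff, no_tight_5to12_19_13_iff by exact C.
  tauto.
Qed.
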